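(* Let $A\in\mathbb{R}^{n\times n}$ with rows $a_1^T,\dots,a_n^T$ and $B=(b_1,\dots,b_n)^T$ with all $b_j\neq0$. Let $\lambda_1,\dots,\lambda_n$ be pairwise distinct real numbers, none an eigenvalue of $A$. For each $i$ let $H_i$ be the affine hull of the row vectors $k_{ij}=\frac{1}{b_j}(a_j^T-\lambda_ie_j^T)$, $j=1,\dots,n$ (an affine hyperplane of $\mathbb{R}^{1\times n}$). Then $H_1\cap\dots\cap H_n\neq\emptyset$ if and only if $(A,B)$ is controllable; in that case the intersection is a single point $K$, and it satisfies $$\det(\lambda I-A+BK)=\prod_{i=1}^n(\lambda-\lambda_i).$$
   Context: $e_j$ denotes the $j$-th canonical basis vector of $\mathbb{R}^n$; $(A,B)$ controllable means $(B\;AB\;\cdots\;A^{n-1}B)$ is invertible. *)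

From HB Require Import structures.
From mathcomp Require Import all_boot all_order all_algebra.
From mathcomp Require Import reals.
Set Implicit Arguments. Unset Strict Implicit. Unset Printing Implicit Defensive.
Import GRing.Theory Num.Theory.
Local Open Scope ring_scope.

Definition affine_hull (R : fieldType) (m n : nat) (v : 'I_m -> 'rV[R]_n)
  (x : 'rV[R]_n) : Prop :=
  exists c : 'I_m -> R, \sum_(j < m) c j = 1 /\ x = \sum_(j < m) c j *: v j.

Definition erow (R : fieldType) (n : nat) (j : 'I_n) : 'rV[R]_n := delta_mx 0 j.

Definition kvec (R : fieldType) (n : nat) (A : 'M[R]_n) (B : 'cV[R]_n)
  (lam : 'I_n -> R) (i j : 'I_n) : 'rV[R]_n :=
  (B j 0)^-1 *: (row j A - lam i *: erow R j).

Definition ctrb_mx (R : fieldType) (n : nat) (A : 'M[R]_n) (B : 'cV[R]_n)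
  : 'M[R]_n := \matrix_(i < n, k < n) (A ^+ k *m B) i 0.

Definition controllable (R : fieldType) (n : nat) (A : 'M[R]_n) (B : 'cV[R]_n)
  : Prop := ctrb_mx A B \in unitmx.

(* The points k_{ij} are the rows of A - λ_i I scaled by 1/b_j, so K lies in H_i
   iff K u_i = 1 for u_i := (A - λ_i I)^-1 B: the intersection of the H_i is
   {K | K U = (1 ... 1)}, where U has columns u_i.
   By Cayley-Hamilton, (A - λI)^-1 = -χ(λ)^-1 q_λ(A), where q_λ is the quotient
   of χ - χ(λ) by X - λ.  This writes U as the controllability matrix times a
   matrix built from the coefficients of the q_{λ_i}, which is invertible because the
   λ_i are distinct; so U is invertible iff (A, B) is controllable.
   If K U = (1 ... 1), then (A - BK) U = U diag(λ_i), so the rows K (A - BK)^p U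
   form the Vandermonde matrix of the λ_i and U is invertible.  Conversely, for
   invertible U, K = (1 ... 1) U^-1 is the unique common point of the H_i, and
   A - BK = U diag(λ_i) U^-1. *)
From HB Require Import structures.
From mathcomp Require Import all_boot all_order all_algebra.
From mathcomp Require Import reals.
From mathcomp Require Import zify ring.
Import GRing.Theory Num.Theory.
Local Open Scope ring_scope.

Lemma col_mulmx (R : pzSemiRingType) m n p (M : 'M[R]_(m, n)) (U : 'M_(n, p)) i :
  col i (M *m U) = M *m col i U.
Proof. by rewrite !colE mulmxA. Qed.

Lemma col_matrixP (R : Type) m n (M N : 'M[R]_(m, n)) :
  (forall i, col i M = col i N) -> M = N.
Proof.
by move=> eqMN; apply: trmx_inj; apply/row_matrixP => i; rewrite -!tr_col eqMN.
Qed.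

Lemma drop_polyMXaddC (R : nzSemiRingType) k (q : {poly R}) c :
  drop_poly k.+1 (q * 'X + c%:P) = drop_poly k q.
Proof.
rewrite drop_polyD [drop_poly _ c%:P]drop_poly_eq0 ?addr0; last first.
  exact: leq_trans (size_polyC_leq1 c) _.
by rewrite -['X]expr1 drop_polyMXn subn1 subSS sub0n expr0 mulr1.
Qed.

Section QuotXsubC.
Context {R : comNzRingType}.
Implicit Types (p q : {poly R}) (x : R).

Definition quot_XsubC p x : {poly R} :=
  \poly_(j < (size p).-1) (drop_poly j.+1 p).[x].

Lemma coef_quot_XsubC p x j : (quot_XsubC p x)`_j = (drop_poly j.+1 p).[x].
Proof.
rewrite coef_poly; case: ltnP => // le_p_j.
by rewrite drop_poly_eq0 ?horner0 // (leq_trans (leqSpred _)).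
Qed.

Lemma quot_XsubC_MXaddC q c x :
  quot_XsubC (q * 'X + c%:P) x = q.[x]%:P + quot_XsubC q x * 'X.
Proof.
apply/polyP => -[|j]; rewrite coefD coefMX coefC !coef_quot_XsubC /=.
  by rewrite drop_polyMXaddC drop_poly0l addr0.
by rewrite drop_polyMXaddC add0r.
Qed.

Lemma mul_quot_XsubC p x : quot_XsubC p x * ('X - x%:P) = p - (p.[x])%:P.
Proof.
elim/poly_ind: p => [|q c IHq].
  by rewrite /quot_XsubC size_poly0 poly_def big_ord0 mul0r horner0 subrr.
rewrite quot_XsubC_MXaddC mulrDl mulrAC IHq hornerMXaddC.
by rewrite mulrBr mulrBl polyCD polyCM; ring.
Qed.

End QuotXsubC.

Lemma drop_poly_free (R : idomainType) n (p : {poly R}) (c : 'I_n -> R) :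
  size p = n.+1 -> \sum_(j < n) c j *: drop_poly j.+1 p = 0 -> forall j, c j = 0.
Proof.
move=> size_p sum0.
have lead_p : p`_n != 0.
  rewrite -[n]/(n.+1.-1) -size_p -lead_coefE lead_coef_eq0.
  by rewrite -size_poly_gt0 size_p.
suff c0 k (j : 'I_n) : (j < k)%N -> c j = 0 by move=> j; apply: (c0 n).
elim: k j => [//|k IHk] j lt_jk.
(* the coefficient of index n - j - 1 sees c j times the leading coefficient of p,
   and otherwise only the c i with i < j *)
have /eqP := congr1 (fun q : {poly R} => q`_(n - j.+1)) sum0.
rewrite coef_sum coef0 (bigD1 j) //= big1 ?addr0.
  rewrite coefZ coef_drop_poly mulf_eq0 subnK //.
  by rewrite (negbTE lead_p) orbF => /eqP.
move=> i neq_ij; rewrite coefZ coef_drop_poly.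
have [lt_ij|lt_ji|/val_inj eq_ij] := ltngtP i j.
- by rewrite IHk ?mul0r //; lia.
- by rewrite nth_default ?mulr0 // size_p; have := ltn_ord j; lia.
- by rewrite eq_ij eqxx in neq_ij.
Qed.

Lemma unitmx_drop_horner (R : fieldType) n (p : {poly R}) (x : 'I_n -> R) :
  size p = n.+1 -> injective x ->
  \matrix_(j < n, i < n) (drop_poly j.+1 p).[x i] \in unitmx.
Proof.
move=> size_p inj_x; rewrite -row_free_unit; apply/inj_row_free => v v0.
pose q := \sum_(j < n) v 0 j *: drop_poly j.+1 p.
have q0 : q = 0.
  apply: (@roots_geq_poly_eq0 _ _ [seq x i | i <- enum 'I_n]).
  - apply/allP => _ /mapP[i _ ->]; apply/rootP.
    have -> : q.[x i]
        = (v *m \matrix_(j < n, i < n) (drop_poly j.+1 p).[x i]) 0 i.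
      by rewrite mxE horner_sum; apply: eq_bigr => j _; rewrite hornerZ mxE.
    by rewrite v0 mxE.
  - by rewrite map_inj_uniq ?enum_uniq.
  - rewrite size_map size_enum_ord; apply: (leq_trans (size_sum _ _ _)).
    apply/bigmax_leqP => j _; rewrite (leq_trans (size_scale_leq _ _)) //.
    by rewrite size_drop_poly size_p; lia.
by apply/rowP => j; rewrite mxE; apply: drop_poly_free size_p q0 j.
Qed.

Lemma unitmx_Vandermonde (R : fieldType) n (d : 'I_n -> R) :
  injective d -> Vandermonde n (\row_i d i) \in unitmx.
Proof.
move=> inj_d; rewrite unitmxE det_Vandermonde unitfE.
apply/prodf_neq0 => i _; apply/prodf_neq0 => j lt_ij; rewrite !mxE subr_eq0.
by apply: contraTneq lt_ij => /inj_d ->; rewrite ltnn.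
Qed.

Lemma eigenvalue_unitmx (R : fieldType) n (M : 'M[R]_n) a :
  eigenvalue M a = (M - a%:M \notin unitmx).
Proof. by rewrite /eigenvalue /eigenspace kermx_eq0 row_free_unit. Qed.

Lemma char_poly_conj (R : comUnitRingType) n (P M : 'M[R]_n) :
  P \in unitmx -> char_poly (P *m M *m invmx P) = char_poly M.
Proof.
move=> unitP; rewrite /char_poly /char_poly_mx.
have -> : 'X%:M - map_mx polyC (P *m M *m invmx P)
    = map_mx polyC P *m ('X%:M - map_mx polyC M) *m map_mx polyC (invmx P).
  rewrite !map_mxM mulmxBr mulmxBl; congr (_ - _).
  by rewrite scalar_mxC -mulmxA -map_mxM mulmxV // map_mx1 mulmx1.
by rewrite !det_mulmx mulrAC -det_mulmx -map_mxM mulmxV // map_mx1 det1 mul1r.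
Qed.

Lemma unitmx_eigen_cols (R : fieldType) n (F U : 'M[R]_n) (d : 'I_n -> R)
    (K : 'rV_n) :
  injective d -> F *m U = U *m diag_mx (\row_i d i) -> K *m U = const_mx 1 ->
  U \in unitmx.
Proof.
move=> inj_d FU KU.
have Fpow p i : F ^+ p *m col i U = d i ^+ p *: col i U.
  have Fcol : F *m col i U = d i *: col i U.
    rewrite -col_mulmx FU; apply/colP => r.
    by rewrite mul_mx_diag !mxE mulrC.
  elim: p => [|p IHp]; first by rewrite expr0 mul1mx scale1r.
  by rewrite exprS -mulmxE -mulmxA IHp -scalemxAr Fcol scalerA -exprSr.
have VU : \matrix_(p < n, r < n) (K *m F ^+ p) 0 r *m U
    = Vandermonde n (\row_i d i).
  apply/matrixP => p i; rewrite !mxE.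
  have -> : d i ^+ p = (K *m (F ^+ p *m col i U)) 0 0.
    by rewrite Fpow -scalemxAr -col_mulmx KU col_const !mxE mulr1.
  by rewrite mulmxA mxE; apply: eq_bigr => r _; rewrite !mxE.
by have := @unitmx_Vandermonde R n d inj_d; rewrite -VU unitmx_mul => /andP[].
Qed.

Section Resolvent.
Context {R : fieldType} {n : nat}.

Definition resolvent_mx (A : 'M[R]_n) (B : 'cV[R]_n) (lam : 'I_n -> R) : 'M_n :=
  \matrix_(r, i) (invmx (A - (lam i)%:M) *m B) r 0.

Context {A : 'M[R]_n} {B : 'cV[R]_n} {lam : 'I_n -> R}.
Hypothesis unitA : forall i, A - (lam i)%:M \in unitmx.

Lemma col_resolvent_mx i :
  col i (resolvent_mx A B lam) = invmx (A - (lam i)%:M) *m B.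
Proof. by apply/colP => r; rewrite !mxE. Qed.

Lemma affine_hull_kvec i K :
  (forall j, B j 0 != 0) ->
  affine_hull (kvec A B lam i) K <-> (K *m resolvent_mx A B lam) 0 i = 1.
Proof.
move=> nzB; set M := A - (lam i)%:M.
have kvecE j : kvec A B lam i j = (B j 0)^-1 *: row j M.
  congr (_ *: _); apply/rowP => k; rewrite !mxE.
  by case: (eqVneq j k) => [->|]; rewrite ?mulr1n ?mulr0n ?mulr1 ?mulr0.
have -> : (K *m resolvent_mx A B lam) 0 i = (K *m invmx M *m B) 0 0.
  by rewrite -mulmxA -col_resolvent_mx -col_mulmx !mxE.
(* the affine combination with weights c is w M for w_j = c_j / b_j,
   and w B = sum c_j is the affine constraint *)
split=> [[c [sum_c ->]] | KB].
  pose w := \row_j (c j / B j 0).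
  have -> : \sum_(j < n) c j *: kvec A B lam i j = w *m M.
    by rewrite mulmx_sum_row; apply: eq_bigr => j _; rewrite kvecE scalerA mxE.
  rewrite (mulmxK (unitA i)) mxE -sum_c; apply: eq_bigr => j _.
  by rewrite /w mxE divfK.
pose w := K *m invmx M; exists (fun j => w 0 j * B j 0); split.
  by rewrite -KB mxE.
rewrite -[K](mulmxKV (unitA i)) -/w mulmx_sum_row; apply: eq_bigr => j _.
by rewrite kvecE scalerA mulfK.
Qed.

Lemma mulmx_resolvent_mx :
  A *m resolvent_mx A B lam
    = resolvent_mx A B lam *m diag_mx (\row_i lam i) + B *m const_mx 1.
Proof.
apply: col_matrixP => i; rewrite col_mulmx linearD /=.
have -> : col i (resolvent_mx A B lam *m diag_mx (\row_i lam i))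
    = lam i *: col i (resolvent_mx A B lam).
  by apply/colP => r; rewrite mul_mx_diag !mxE mulrC.
have -> : col i (B *m const_mx 1) = B.
  by rewrite col_mulmx col_const; apply/colP => r; rewrite mxE big_ord1 mxE mulr1.
rewrite col_resolvent_mx -{1}(subrK ((lam i)%:M) A) mulmxDl mulmxA.
by rewrite mulmxV // mul1mx mul_scalar_mx addrC.
Qed.

Lemma resolvent_mx_closed_loop K :
  K *m resolvent_mx A B lam = const_mx 1 ->
  (A - B *m K) *m resolvent_mx A B lam
    = resolvent_mx A B lam *m diag_mx (\row_i lam i).
Proof. by move=> KU; rewrite mulmxBl mulmx_resolvent_mx -mulmxA KU addrK. Qed.

Lemma char_poly_closed_loop K :
  resolvent_mx A B lam \in unitmx -> K *m resolvent_mx A B lam = const_mx 1 ->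
  char_poly (A - B *m K) = \prod_(i < n) ('X - (lam i)%:P).
Proof.
move=> unitU KU; rewrite -[A - B *m K](mulmxK unitU) resolvent_mx_closed_loop //.
rewrite char_poly_conj // char_poly_trig ?diag_mx_is_trig //.
by apply: eq_bigr => i _; rewrite !mxE eqxx.
Qed.

End Resolvent.

Section ResolventHorner.
Variables (R : fieldType) (n : nat) (A : 'M[R]_n.+1).

Lemma horner_mx_ctrb (B : 'cV[R]_n.+1) (p : {poly R}) :
  (size p <= n.+1)%N -> horner_mx A p *m B = ctrb_mx A B *m \col_j p`_j.
Proof.
move=> size_p; rewrite [in LHS](_ : p = \poly_(j < n.+1) p`_j); last first.
  apply/polyP => j; rewrite coef_poly; case: ltnP => // le_n_j.
  by rewrite nth_default // (leq_trans size_p).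
rewrite poly_def rmorph_sum mulmx_suml; apply/colP => r.
rewrite summxE mxE; apply: eq_bigr => j _.
rewrite -mul_polyC rmorphM rmorphXn /= horner_mx_C horner_mx_X -mulmxE.
rewrite mul_scalar_mx -scalemxAl !mxE mulrC.
by congr (_ * _); apply: eq_bigr => k _; rewrite mxE.
Qed.

Lemma invmx_resolvent x :
  ~~ eigenvalue A x ->
  invmx (A - x%:M)
    = - ((char_poly A).[x])^-1 *: horner_mx A (quot_XsubC (char_poly A) x).
Proof.
move=> noeig.
have unitM : A - x%:M \in unitmx by rewrite -[_ \in _]negbK -eigenvalue_unitmx.
have nz_chi : (char_poly A).[x] != 0 by move: noeig; rewrite eigenvalue_root_char.
have := congr1 (horner_mx A) (mul_quot_XsubC (char_poly A) x).
rewrite rmorphM rmorphB rmorphB /= horner_mx_X !horner_mx_C Cayley_Hamilton sub0r.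
move=> /(congr1 (mulmx^~ (invmx (A - x%:M)))); rewrite -mulmxE -mulmxA mulmxV //.
rewrite mulmx1 => ->; rewrite mulNmx mul_scalar_mx scaleNr scalerN scalerA.
by rewrite mulVf // scale1r opprK.
Qed.

Lemma resolvent_mx_ctrb (B : 'cV[R]_n.+1) (lam : 'I_n.+1 -> R) :
  (forall i, ~~ eigenvalue A (lam i)) ->
  resolvent_mx A B lam = ctrb_mx A B
    *m \matrix_(j, i) (drop_poly j.+1 (char_poly A)).[lam i]
    *m diag_mx (\row_i - ((char_poly A).[lam i])^-1).
Proof.
move=> noeig; apply: col_matrixP => i.
rewrite col_resolvent_mx -mulmxA col_mulmx invmx_resolvent // -scalemxAl.
rewrite horner_mx_ctrb; last first.
  by rewrite (leq_trans (size_poly _ _)) // size_char_poly.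
rewrite scalemxAr; congr (_ *m _).
by apply/colP => j; rewrite mul_mx_diag !mxE coef_quot_XsubC mulrC.
Qed.

End ResolventHorner.

Lemma unitmx_resolvent_mx (R : fieldType) n (A : 'M[R]_n) (B : 'cV[R]_n)
    (lam : 'I_n -> R) :
  injective lam -> (forall i, ~~ eigenvalue A (lam i)) ->
  (resolvent_mx A B lam \in unitmx) = (ctrb_mx A B \in unitmx).
Proof.
case: n => [|n] in A B lam * => inj_lam noeig.
  by rewrite !unitmxE !det_mx00.
have nz_chi i : (char_poly A).[lam i] != 0.
  by move: (noeig i); rewrite eigenvalue_root_char.
rewrite resolvent_mx_ctrb // !unitmx_mul unitmx_drop_horner ?size_char_poly //.
rewrite andbT [diag_mx _ \in _]unitmxE det_diag unitfE.
rewrite (introT (prodf_neq0 _ _)) ?andbT // => i _.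
by rewrite mxE oppr_eq0 invr_eq0.
Qed.

Theorem mainTheorem7 (R : realType) (n : nat) (A : 'M[R]_n) (B : 'cV[R]_n)
  (lam : 'I_n -> R)
  (hB : forall j : 'I_n, B j 0 != 0)
  (hlam : injective lam)
  (heig : forall i : 'I_n, ~~ eigenvalue A (lam i)) :
  ((exists K : 'rV[R]_n, forall i : 'I_n, affine_hull (kvec A B lam i) K)
     <-> controllable A B) /\
  (controllable A B ->
   exists K : 'rV[R]_n,
     (forall i : 'I_n, affine_hull (kvec A B lam i) K) /\
     (forall K' : 'rV[R]_n,
        (forall i : 'I_n, affine_hull (kvec A B lam i) K') -> K' = K) /\
     char_poly (A - B *m K) = \prod_(i < n) ('X - (lam i)%:P)).
Proof.
have unitA i : A - (lam i)%:M \in unitmx.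
  by rewrite -[_ \in _]negbK -eigenvalue_unitmx.
set U := resolvent_mx A B lam.
have hull K : (forall i, affine_hull (kvec A B lam i) K) <-> K *m U = const_mx 1.
  split=> [inK | KU i].
    by apply/rowP => i; rewrite [RHS]mxE; apply/(affine_hull_kvec unitA i K hB).
  by apply/(affine_hull_kvec unitA i K hB); rewrite KU mxE.
have unitU : (U \in unitmx) = (ctrb_mx A B \in unitmx).
  exact: unitmx_resolvent_mx.
have sufficiency : controllable A B -> exists K : 'rV[R]_n,
    (forall i, affine_hull (kvec A B lam i) K) /\
    (forall K', (forall i, affine_hull (kvec A B lam i) K') -> K' = K) /\
    char_poly (A - B *m K) = \prod_(i < n) ('X - (lam i)%:P).
  rewrite /controllable -unitU => uU; pose K : 'rV_n := const_mx 1 *m invmx U.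
  have KU : K *m U = const_mx 1 by rewrite /K mulmxKV.
  exists K; split; [exact/hull | split].
    by move=> K' /hull K'U; rewrite -(mulmxK uU K') K'U.
  exact: char_poly_closed_loop.
split=> //; split=> [[K /hull KU] | /sufficiency [K [inK _]]]; last by exists K.
rewrite /controllable -unitU.
exact: unitmx_eigen_cols hlam (resolvent_mx_closed_loop unitA _ KU) KU.
Qed.
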